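(* There exist a finitely generated torsion-free group $G$ and a finitely generated subgroup $H\leqslant G$ such that the spectrum $\mathrm{Ord}_H(G)$ is not computably enumerable; and there also exist a finitely generated torsion-free group $G$ and a finitely generated subgroup $H\leqslant G$ such that $\mathrm{Ord}_H(G)$ is computably enumerable but not computable.
   Context: For a group $G$, a subset $S\subseteq G$ and $g\in G$, $\mathrm{Ord}_S(g)=\min\{k\geq 1: g^k\in S\}$ if such $k$ exists and $0$ otherwise; the spectrum is $\mathrm{Ord}_S(G)=\{\mathrm{Ord}_S(g):g\in G\}\subseteq\mathbb{N}$. *)

From Stdlib Require Import List Arith.
Import ListNotations.
Set Implicit Arguments.

Record group := Group {
  carrier :> Type;
  gmul : carrier -> carrier -> carrier;
  gone : carrier;
  ginv : carrier -> carrier;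
  gmulA : forall x y z, gmul x (gmul y z) = gmul (gmul x y) z;
  gmul1l : forall x, gmul gone x = x;
  gmul1r : forall x, gmul x gone = x;
  gmulVl : forall x, gmul (ginv x) x = gone;
  gmulVr : forall x, gmul x (ginv x) = gone
}.

Fixpoint gpow (G : group) (g : G) (k : nat) : G :=
  match k with 0 => gone G | S k' => gmul G g (@gpow G g k') end.
Arguments gpow {G} g k.

Inductive in_gen (G : group) (S : list G) : G -> Prop :=
| gen_one : in_gen G S (gone G)
| gen_mul : forall s x, In s S -> in_gen G S x -> in_gen G S (gmul G s x)
| gen_mulV : forall s x, In s S -> in_gen G S x -> in_gen G S (gmul G (ginv G s) x).
Arguments in_gen {G} S _.

Definition finitely_generated (G : group) : Prop :=
  exists S : list G, forall x : G, in_gen S x.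

Definition torsion_free (G : group) : Prop :=
  forall (g : G) (k : nat), 1 <= k -> gpow g k = gone G -> g = gone G.

Definition Ord_is (G : group) (S : G -> Prop) (g : G) (n : nat) : Prop :=
  (1 <= n /\ S (gpow g n) /\ forall k, 1 <= k -> k < n -> ~ S (gpow g k))
  \/ (n = 0 /\ forall k, 1 <= k -> ~ S (gpow g k)).
Arguments Ord_is {G} S g n.

Definition spectrum (G : group) (S : G -> Prop) (n : nat) : Prop :=
  exists g : G, Ord_is S g n.
Arguments spectrum {G} S n.

(** * Partial recursive functions (Kleene), untyped arities with defaults *)
Inductive prf : Type :=
| PZero : prf
| PSucc : prf
| PProj : nat -> prf
| PComp : prf -> list prf -> prf
| PPrim : prf -> prf -> prf
| PMu : prf -> prf.

Inductive eval : prf -> list nat -> nat -> Prop :=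
| ev_zero : forall v, eval PZero v 0
| ev_succ : forall v, eval PSucc v (S (hd 0 v))
| ev_proj : forall i v, eval (PProj i) v (nth i v 0)
| ev_comp : forall f gs v ys y,
    evals gs v ys -> eval f ys y -> eval (PComp f gs) v y
| ev_prim0 : forall f g v y, eval f v y -> eval (PPrim f g) (0 :: v) y
| ev_primS : forall f g n v r y,
    eval (PPrim f g) (n :: v) r -> eval g (n :: r :: v) y ->
    eval (PPrim f g) (S n :: v) y
| ev_mu : forall f v n,
    eval f (n :: v) 0 ->
    (forall m, m < n -> exists k, eval f (m :: v) (S k)) ->
    eval (PMu f) v n
with evals : list prf -> list nat -> list nat -> Prop :=
| evs_nil : forall v, evals [] v []
| evs_cons : forall g gs v y ys,
    eval g v y -> evals gs v ys -> evals (g :: gs) v (y :: ys).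

Definition comp_enum (A : nat -> Prop) : Prop :=
  exists f : prf, forall n, A n <-> exists y, eval f [n] y.

Definition computable (A : nat -> Prop) : Prop :=
  exists f : prf, forall n, (A n -> eval f [n] 1) /\ (~ A n -> eval f [n] 0).

From Stdlib Require Import List Arith Lia ZArith QArith Qcanon.
From Stdlib Require Import FunctionalExtensionality ProofIrrelevance ClassicalEpsilon.
Import ListNotations.
Open Scope nat_scope.

(** Fix a chain [Q_0 | Q_1 | ...] of positive integers and let [X] be the set
    of divisors of the [Q_t]. In the group of bijections
    [(i, j, q) |-> (i + a, j + f i, q + h i j)] of [Z * Z * Q], let [G] be
    generated by the shift [a], the element [b] with [f] the indicator of [0],
    and the element [c] with [h i j = j / i] for [i] in [X] and [0] otherwise;
    let [H] be generated by [z], which has [h i j = 1] for [i = 0] and [0]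
    otherwise. Conjugating [b] by [a ^ d], commuting with [c] and conjugating
    back by [a ^ d] yields the root [z ^ (1/d)] for every [d] in [X], and it
    has order [d] modulo [H]; conversely all coordinates [h i j] of elements
    of [G] lie in some [(1 / Q_t) Z], and the ambient group is torsion-free,
    so [Ord_H(G) = {0} ∪ X]. Taking for [Q_t] the product of the pairwise
    coprime Sylvester numbers [s_k] over the [k < t] enumerated into a set [B]
    by stage [t], [s_k] lies in [Ord_H(G)] iff [k] is in [B]. Both parts are
    then diagonal arguments: against all partial recursive functions for a
    set [B] chosen classically, and against total ones for [B] the halting
    set, which is enumerated by a universal machine written as a partial
    recursive function. *)

(** * Partial recursive functions *)

Lemma evals1 a v x : eval a v x -> evals [a] v [x].
Proof. repeat constructor; auto. Qed.

Lemma evals2 a b v x y : eval a v x -> eval b v y -> evals [a; b] v [x; y].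
Proof. repeat constructor; auto. Qed.

Lemma eval_prim_rect F G f g :
  (forall w, eval F w (f w)) -> (forall w, eval G w (g w)) ->
  forall N v, eval (PPrim F G) (N :: v) (nat_rect _ (f v) (fun k r => g (k :: r :: v)) N).
Proof. intros HF HG N v; induction N; econstructor; eauto. Qed.

Inductive exp :=
| EVar (i : nat) | EZero | ESucc (e : exp) | ERec (base step n a : exp)
| ECall1 (body a : exp) | ECall2 (body a b : exp).

Fixpoint den (e : exp) (v : list nat) : nat :=
  match e with
  | EVar i => nth i v 0
  | EZero => 0
  | ESucc e => S (den e v)
  | ERec b s n a =>
      nat_rect _ (den b [den a v]) (fun k r => den s [k; r; den a v]) (den n v)
  | ECall1 b x => den b [den x v]
  | ECall2 b x y => den b [den x v; den y v]
  end.

Fixpoint compile (e : exp) : prf :=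
  match e with
  | EVar i => PProj i
  | EZero => PZero
  | ESucc e => PComp PSucc [compile e]
  | ERec b s n a => PComp (PPrim (compile b) (compile s)) [compile n; compile a]
  | ECall1 b x => PComp (compile b) [compile x]
  | ECall2 b x y => PComp (compile b) [compile x; compile y]
  end.

Lemma eval_compile e v : eval (compile e) v (den e v).
Proof.
  revert v; induction e; intros v; simpl.
  - constructor.
  - constructor.
  - econstructor; [apply evals1; eauto | constructor].
  - econstructor; [apply evals2; eauto |].
    apply (eval_prim_rect (compile e1) (compile e2) (den e1) (den e2)); auto.
  - econstructor; [apply evals1; eauto | auto].
  - econstructor; [apply evals2; eauto | auto].
Qed.

Notation V0 := (EVar 0).
Notation V1 := (EVar 1).
Notation V2 := (EVar 2).

Fixpoint enum n := match n with 0 => EZero | S n => ESucc (enum n) end.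

Lemma den_enum n v : den (enum n) v = n.
Proof. induction n; simpl; auto. Qed.

Definition ifz (c a b : nat) : nat := match c with 0 => a | S _ => b end.

Definition eAdd a b := ERec V0 (ESucc V1) a b.
Definition ePred a := ERec EZero V0 a EZero.
Definition eSub a b := ERec V0 (ePred V1) b a.
Definition eMul a b := ERec EZero (eAdd V1 V2) a b.
Definition eIfz c a b :=
  eAdd (eMul a (eSub (enum 1) c)) (eMul b (eSub (enum 1) (eSub (enum 1) c))).

Lemma den_eAdd a b v : den (eAdd a b) v = den a v + den b v.
Proof. simpl. induction (den a v); simpl; auto. Qed.
Global Opaque eAdd.

Lemma den_ePred a v : den (ePred a) v = pred (den a v).
Proof. simpl. destruct (den a v); reflexivity. Qed.
Global Opaque ePred.

Lemma den_eSub a b v : den (eSub a b) v = den a v - den b v.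
Proof.
  simpl. generalize (den b v) (den a v); intros n x.
  induction n as [|n IH]; simpl; [lia|]. rewrite den_ePred, IH; simpl. lia.
Qed.
Global Opaque eSub.

Lemma den_eMul a b v : den (eMul a b) v = den a v * den b v.
Proof.
  simpl. generalize (den a v); intros n.
  induction n as [|n IH]; simpl; auto. rewrite den_eAdd; simpl. lia.
Qed.
Global Opaque eMul.

Lemma den_eIfz c a b v : den (eIfz c a b) v = ifz (den c v) (den a v) (den b v).
Proof.
  unfold eIfz. rewrite den_eAdd, !den_eMul, !den_eSub; simpl.
  destruct (den c v); simpl; lia.
Qed.

Global Opaque eIfz.
Hint Rewrite den_enum den_eAdd den_eSub den_eMul den_eIfz : den.
Ltac den_simpl := repeat (progress (cbn [den nth]; autorewrite with den)).

(** [Scheme] gives no induction hypothesis for the nested premise of [ev_mu]. *)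
Section EvalInd.
Variable P : prf -> list nat -> nat -> Prop.
Variable Q : list prf -> list nat -> list nat -> Prop.
Hypothesis h_zero : forall v, P PZero v 0.
Hypothesis h_succ : forall v, P PSucc v (S (hd 0 v)).
Hypothesis h_proj : forall i v, P (PProj i) v (nth i v 0).
Hypothesis h_comp : forall f gs v ys y,
  evals gs v ys -> Q gs v ys -> eval f ys y -> P f ys y -> P (PComp f gs) v y.
Hypothesis h_prim0 : forall f g v y, eval f v y -> P f v y -> P (PPrim f g) (0 :: v) y.
Hypothesis h_primS : forall f g n v r y,
  eval (PPrim f g) (n :: v) r -> P (PPrim f g) (n :: v) r ->
  eval g (n :: r :: v) y -> P g (n :: r :: v) y -> P (PPrim f g) (S n :: v) y.
Hypothesis h_mu : forall f v n, eval f (n :: v) 0 -> P f (n :: v) 0 ->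
  (forall m, m < n -> exists k, eval f (m :: v) (S k) /\ P f (m :: v) (S k)) ->
  P (PMu f) v n.
Hypothesis h_nil : forall v, Q [] v [].
Hypothesis h_cons : forall g gs v y ys,
  eval g v y -> P g v y -> evals gs v ys -> Q gs v ys -> Q (g :: gs) v (y :: ys).

Fixpoint eval_mut_ind t v y (H : eval t v y) {struct H} : P t v y :=
  match H in eval t v y return P t v y with
  | ev_zero v => h_zero v
  | ev_succ v => h_succ v
  | ev_proj i v => h_proj i v
  | ev_comp Hs Hf =>
      h_comp _ _ _ _ _ Hs (evals_mut_ind _ _ _ Hs) Hf (eval_mut_ind _ _ _ Hf)
  | ev_prim0 g H1 => h_prim0 _ g _ _ H1 (eval_mut_ind _ _ _ H1)
  | ev_primS H1 H2 =>
      h_primS _ _ _ _ _ _ H1 (eval_mut_ind _ _ _ H1) H2 (eval_mut_ind _ _ _ H2)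
  | ev_mu H0 Hlt => h_mu _ _ _ H0 (eval_mut_ind _ _ _ H0)
      (fun m hm => match Hlt m hm with
                   | ex_intro _ k Hk => ex_intro _ k (conj Hk (eval_mut_ind _ _ _ Hk)) end)
  end
with evals_mut_ind gs v ys (H : evals gs v ys) {struct H} : Q gs v ys :=
  match H in evals gs v ys return Q gs v ys with
  | evs_nil v => h_nil v
  | evs_cons H1 H2 => h_cons _ _ _ _ _ H1 (eval_mut_ind _ _ _ H1) H2 (evals_mut_ind _ _ _ H2)
  end.
End EvalInd.

Lemma eval_det : forall t v y, eval t v y -> forall y', eval t v y' -> y = y'.
Proof.
  apply (eval_mut_ind (fun t v y => forall y', eval t v y' -> y = y')
                      (fun gs v ys => forall ys', evals gs v ys' -> ys = ys')).
  - intros v y' H. inversion H. auto.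
  - intros v y' H. inversion H. auto.
  - intros i v y' H. inversion H. auto.
  - intros f gs v ys y _ IHgs _ IHf y' H.
    inversion H as [| | |? ? ? ys' ? Hgs Hf| | |]; subst.
    apply IHgs in Hgs; subst. auto.
  - intros f g v y _ IHf y' H. inversion H; subst. auto.
  - intros f g n v r y _ IHr _ IHg y' H.
    inversion H as [| | | | |? ? ? ? r' ? Hr Hg|]; subst.
    apply IHr in Hr; subst. auto.
  - intros f v n _ IH0 Hlt y' H. inversion H as [| | | | | |? ? ? H0 Hlt']; subst.
    destruct (lt_eq_lt_dec n y') as [[Hl|He]|Hl]; auto.
    + destruct (Hlt' _ Hl) as [k Hk]. apply IH0 in Hk. discriminate.
    + destruct (Hlt _ Hl) as [k [_ IHk]]. apply IHk in H0. discriminate.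
  - intros v ys' H. inversion H. auto.
  - intros g gs v y ys _ IHg _ IHgs ys' H. inversion H; subst. f_equal; auto.
Qed.

Lemma eval_mu_iff F fF : (forall w, eval F w (fF w)) ->
  forall v n, eval (PMu F) v n <-> fF (n :: v) = 0 /\ forall m, m < n -> fF (m :: v) <> 0.
Proof.
  intros HF v n; split.
  - intros H; inversion H as [| | | | | |? ? ? H0 Hlt]; subst. split.
    + eapply eval_det; eauto.
    + intros m Hm E. destruct (Hlt _ Hm) as [k Hk].
      specialize (HF (m :: v)). rewrite E in HF.
      pose proof (eval_det _ _ _ Hk _ HF). discriminate.
  - intros [H1 H2]. constructor.
    + rewrite <- H1; auto.
    + intros m Hm. specialize (H2 _ Hm).
      destruct (fF (m :: v)) as [|k] eqn:E; [congruence|].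
      exists k. rewrite <- E; auto.
Qed.

Lemma halts_mu_iff F fF : (forall w, eval F w (fF w)) ->
  forall v, (exists y, eval (PMu F) v y) <-> exists n, fF (n :: v) = 0.
Proof.
  intros HF v; split.
  - intros [y Hy]. apply (eval_mu_iff F fF HF) in Hy. exists y; tauto.
  - intros [n Hn]. induction n as [n IH] using lt_wf_ind.
    destruct (classic (exists m, m < n /\ fF (m :: v) = 0)) as [[m [Hm Hm0]]|Hnone].
    + exact (IH m Hm Hm0).
    + exists n. apply (eval_mu_iff F fF HF). split; auto.
      intros m Hm E. apply Hnone. eauto.
Qed.

(** * Coding programs by numbers *)

(** Szudzik's pairing: [npair x y] is [y*y + x] if [x < y], else [x*x + x + y]. *)
Definition npair x y := ifz (S x - y) (y * y + x) (x * x + x + y).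
Definition nfst z := let s := Nat.sqrt z in let r := z - s * s in ifz (S r - s) r s.
Definition nsnd z := let s := Nat.sqrt z in let r := z - s * s in ifz (S r - s) s (r - s).

Lemma nfst_nsnd_npair x y : nfst (npair x y) = x /\ nsnd (npair x y) = y.
Proof.
  unfold npair, nfst, nsnd.
  destruct (S x - y) eqn:E; cbn [ifz].
  - assert (Nat.sqrt (y * y + x) = y) as -> by (apply Nat.sqrt_unique; nia).
    replace (y * y + x - y * y) with x by lia. rewrite E. split; reflexivity.
  - assert (Nat.sqrt (x * x + x + y) = x) as -> by (apply Nat.sqrt_unique; nia).
    replace (x * x + x + y - x * x) with (x + y) by lia.
    destruct (S (x + y) - x) eqn:E2; [lia|]. split; cbn [ifz]; lia.
Qed.

Lemma nfst_npair x y : nfst (npair x y) = x. Proof. apply nfst_nsnd_npair. Qed.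
Lemma nsnd_npair x y : nsnd (npair x y) = y. Proof. apply nfst_nsnd_npair. Qed.

Lemma npair_inj x y x' y' : npair x y = npair x' y' -> x = x' /\ y = y'.
Proof.
  intros H. split.
  - rewrite <- (nfst_npair x y), H. apply nfst_npair.
  - rewrite <- (nsnd_npair x y), H. apply nsnd_npair.
Qed.

Lemma npair_surj z : npair (nfst z) (nsnd z) = z.
Proof.
  unfold nfst, nsnd. cbv zeta.
  pose proof (Nat.sqrt_spec z (Nat.le_0_l z)) as [H1 H2].
  remember (Nat.sqrt z) as s. remember (z - s * s) as r.
  destruct (S r - s) eqn:E; cbn [ifz]; unfold npair.
  - rewrite E. cbn [ifz]. lia.
  - destruct (S s - (r - s)) eqn:E2; cbn [ifz]; nia.
Qed.

Global Arguments npair : simpl never.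
Global Arguments nfst : simpl never.
Global Arguments nsnd : simpl never.

Definition ncons x l := S (npair x l).
Definition nhead l := ifz l 0 (nfst (l - 1)).
Definition ntail l := ifz l 0 (nsnd (l - 1)).
Definition nnth i l := nhead (nat_rect _ l (fun _ r => ntail r) i).

Fixpoint code_list (v : list nat) : nat :=
  match v with [] => 0 | x :: v => ncons x (code_list v) end.

Fixpoint code (t : prf) : nat :=
  match t with
  | PZero => npair 0 0
  | PSucc => npair 1 0
  | PProj i => npair 2 i
  | PComp f gs => npair 3 (npair (code f) (code_list (map code gs)))
  | PPrim f g => npair 4 (npair (code f) (code g))
  | PMu f => npair 5 (code f)
  end.

Lemma ncons_inj x l x' l' : ncons x l = ncons x' l' -> x = x' /\ l = l'.
Proof. unfold ncons. intros H. injection H. apply npair_inj. Qed.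

Lemma code_inj : forall t t', code t = code t' -> t = t'.
Proof.
  fix IH 1. intros t t'. destruct t, t'; simpl; intros H;
    apply npair_inj in H; destruct H as [Htag H]; try discriminate; subst; try reflexivity.
  - apply npair_inj in H; destruct H as [H1 H2].
    apply IH in H1; subst. f_equal. revert l0 H2.
    induction l as [|g l IHl]; destruct l0; simpl; intros H; try discriminate; auto.
    apply ncons_inj in H. destruct H as [Ha Hb]. apply IH in Ha. subst.
    f_equal. apply IHl. exact Hb.
  - apply npair_inj in H; destruct H as [H1 H2].
    apply IH in H1; apply IH in H2; subst; reflexivity.
  - apply IH in H; subst; reflexivity.
Qed.

Lemma nhead_ncons x l : nhead (ncons x l) = x.
Proof. unfold nhead, ncons. simpl. rewrite Nat.sub_0_r. apply nfst_npair. Qed.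

Lemma ntail_ncons x l : ntail (ncons x l) = l.
Proof. unfold ntail, ncons. simpl. rewrite Nat.sub_0_r. apply nsnd_npair. Qed.

Lemma nhead_code_list v : nhead (code_list v) = hd 0 v.
Proof. destruct v; simpl; auto. apply nhead_ncons. Qed.

Lemma nnth_code_list i v : nnth i (code_list v) = nth i v 0.
Proof.
  assert (Hnil : forall n, nat_rect _ 0 (fun _ r => ntail r) n = 0).
  { induction n as [|n IH]; simpl; auto. rewrite IH. reflexivity. }
  assert (Hcons : forall n x l,
    nat_rect _ (ncons x l) (fun _ r => ntail r) (S n) = nat_rect _ l (fun _ r => ntail r) n).
  { induction n as [|n IH]; intros; simpl in *; [apply ntail_ncons|]. rewrite IH. reflexivity. }
  unfold nnth. revert v; induction i; intros [|x v]; simpl code_list.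
  - reflexivity.
  - apply nhead_ncons.
  - rewrite Hnil. reflexivity.
  - rewrite Hcons. apply IHi.
Qed.

Definition eSqrt :=
  ERec EZero (eAdd V1 (eIfz (eSub (eMul (ESucc V1) (ESucc V1)) V2) (enum 1) EZero)) V0 V0.

Lemma den_eSqrt z : den eSqrt [z] = Nat.sqrt z.
Proof.
  unfold eSqrt. cbn [den nth].
  pose proof (Nat.sqrt_spec z (Nat.le_0_l z)) as [H1 H2]. set (s := Nat.sqrt z) in *.
  enough (forall k, nat_rect _ 0 (fun k r =>
            den (eAdd V1 (eIfz (eSub (eMul (ESucc V1) (ESucc V1)) V2) (enum 1) EZero))
                [k; r; z]) k = Nat.min k s)
    as -> by (pose proof (Nat.sqrt_le_lin z); lia).
  induction k; cbn [nat_rect]; auto. rewrite IHk. den_simpl.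
  destruct (S (Nat.min k s) * S (Nat.min k s) - z) eqn:E; simpl ifz.
  - assert (Nat.min k s < s) by nia. lia.
  - assert (s <= k) by nia. lia.
Qed.

Definition ePair a b :=
  ECall2 (eIfz (eSub (ESucc V0) V1) (eAdd (eMul V1 V1) V0) (eAdd (eAdd (eMul V0 V0) V0) V1)) a b.
Definition eFst a :=
  ECall1 (ECall2 (eIfz (eSub (ESucc (eSub V0 (eMul V1 V1))) V1) (eSub V0 (eMul V1 V1)) V1)
                 V0 (ECall1 eSqrt V0)) a.
Definition eSnd a :=
  ECall1 (ECall2 (eIfz (eSub (ESucc (eSub V0 (eMul V1 V1))) V1) V1 (eSub (eSub V0 (eMul V1 V1)) V1))
                 V0 (ECall1 eSqrt V0)) a.
Definition eCons a b := ESucc (ePair a b).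
Definition eHead a := ECall1 (eIfz V0 EZero (eFst (eSub V0 (enum 1)))) a.
Definition eTail a := ECall1 (eIfz V0 EZero (eSnd (eSub V0 (enum 1)))) a.
Definition eNth i l := eHead (ERec V0 (eTail V1) i l).

Lemma den_ePair a b v : den (ePair a b) v = npair (den a v) (den b v).
Proof. unfold ePair. den_simpl. reflexivity. Qed.

Lemma den_eFst a v : den (eFst a) v = nfst (den a v).
Proof. unfold eFst. den_simpl. rewrite den_eSqrt. reflexivity. Qed.

Lemma den_eSnd a v : den (eSnd a) v = nsnd (den a v).
Proof. unfold eSnd. den_simpl. rewrite den_eSqrt. reflexivity. Qed.

Lemma den_eCons a b v : den (eCons a b) v = ncons (den a v) (den b v).
Proof. unfold eCons. cbn [den]. rewrite den_ePair. reflexivity. Qed.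

Global Opaque ePair eFst eSnd eCons.
Hint Rewrite den_ePair den_eFst den_eSnd den_eCons : den.

Lemma den_eHead a v : den (eHead a) v = nhead (den a v).
Proof. unfold eHead. den_simpl. reflexivity. Qed.

Lemma den_eTail a v : den (eTail a) v = ntail (den a v).
Proof. unfold eTail. den_simpl. reflexivity. Qed.

Global Opaque eHead eTail.
Hint Rewrite den_eHead den_eTail : den.

Lemma den_eNth i l v : den (eNth i l) v = nnth (den i v) (den l v).
Proof.
  unfold eNth, nnth. den_simpl. f_equal.
  induction (den i v) as [|k IH]; cbn [nat_rect]; auto. rewrite IH. den_simpl. reflexivity.
Qed.

Global Opaque eNth.
Hint Rewrite den_eNth : den.

(** * A universal machine *)

Definition st_eval t v K := npair 0 (npair t (npair v K)).
Definition st_ret y K := npair 1 (npair y K).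
Definition st_evals gs v K := npair 2 (npair gs (npair v K)).
Definition fr_tail gs v := npair 0 (npair gs v).
Definition fr_cons y := npair 1 y.
Definition fr_comp f := npair 2 f.
Definition fr_prim g k N w := npair 3 (npair g (npair k (npair N w))).
Definition fr_mu f m v := npair 4 (npair f (npair m v)).

Definition ifeq x y a b := ifz ((x - y) + (y - x)) a b.

(** A state [st_eval t v K] runs the program coded by [t] on the arguments
    coded by [v] under the stack [K] of pending frames. A number that is not
    the code of a program, or a primitive recursion applied to no argument,
    leaves the state unchanged. *)
Definition step_eval s t v K :=
  let op := nfst t in let arg := nsnd t in
  ifz op (st_ret 0 K)
  (ifeq op 1 (st_ret (S (nhead v)) K)
  (ifeq op 2 (st_ret (nnth arg v) K)
  (ifeq op 3 (st_evals (nsnd arg) v (ncons (fr_comp (nfst arg)) K))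
  (ifeq op 4
     (ifz v s (st_eval (nfst arg) (ntail v) (ncons (fr_prim (nsnd arg) 0 (nhead v) (ntail v)) K)))
  (ifeq op 5 (st_eval arg (ncons 0 v) (ncons (fr_mu arg 0 v) K))
  s))))).

Definition step_ret s y K :=
  let fr := nhead K in let K' := ntail K in let op := nfst fr in let arg := nsnd fr in
  let g := nfst arg in let k := nfst (nsnd arg) in let v := nsnd (nsnd arg) in
  let N := nfst v in let w := nsnd v in
  ifz K s
  (ifz op (st_evals (nfst arg) (nsnd arg) (ncons (fr_cons y) K'))
  (ifeq op 1 (st_ret (ncons arg y) K')
  (ifeq op 2 (st_eval arg y K')
  (ifeq op 3
     (ifeq k N (st_ret y K') (st_eval g (ncons k (ncons y w)) (ncons (fr_prim g (S k) N w) K')))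
  (ifeq op 4
     (ifz y (st_ret k K') (st_eval g (ncons (S k) v) (ncons (fr_mu g (S k) v) K')))
  s))))).

Definition step_evals gs v K :=
  ifz gs (st_ret 0 K) (st_eval (nhead gs) v (ncons (fr_tail (ntail gs) v) K)).

Definition step s :=
  let op := nfst s in let p := nsnd s in
  ifz op (step_eval s (nfst p) (nfst (nsnd p)) (nsnd (nsnd p)))
  (ifeq op 1 (step_ret s (nfst p) (nsnd p))
  (ifeq op 2 (step_evals (nfst p) (nfst (nsnd p)) (nsnd (nsnd p)))
  s)).

Definition halted s := ifeq (nfst s) 1 (ifz (nsnd (nsnd s)) 1 0) 0.

Definition run n s := nat_rect _ s (fun _ r => step r) n.

Ltac step_simpl :=
  unfold step, halted, step_eval, step_ret, step_evals, ifeq,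
    st_eval, st_ret, st_evals, fr_tail, fr_cons, fr_comp, fr_prim, fr_mu;
  repeat (rewrite ?nfst_npair, ?nsnd_npair, ?nhead_ncons, ?ntail_ncons; cbn zeta);
  cbn [ifz Nat.sub Nat.add]; try reflexivity.

Lemma step_zero v K : step (st_eval (code PZero) v K) = st_ret 0 K.
Proof. simpl code. step_simpl. Qed.

Lemma step_succ v K : step (st_eval (code PSucc) v K) = st_ret (S (nhead v)) K.
Proof. simpl code. step_simpl. Qed.

Lemma step_proj i v K : step (st_eval (code (PProj i)) v K) = st_ret (nnth i v) K.
Proof. simpl code. step_simpl. Qed.

Lemma step_comp f gs v K :
  step (st_eval (code (PComp f gs)) v K)
  = st_evals (code_list (map code gs)) v (ncons (fr_comp (code f)) K).
Proof. simpl code. step_simpl. Qed.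

Lemma step_prim_nil f g K : step (st_eval (code (PPrim f g)) 0 K) = st_eval (code (PPrim f g)) 0 K.
Proof. simpl code. step_simpl. Qed.

Lemma step_prim f g n w K :
  step (st_eval (code (PPrim f g)) (ncons n w) K)
  = st_eval (code f) w (ncons (fr_prim (code g) 0 n w) K).
Proof. simpl code. step_simpl. Qed.

Lemma step_mu f v K :
  step (st_eval (code (PMu f)) v K) = st_eval (code f) (ncons 0 v) (ncons (fr_mu (code f) 0 v) K).
Proof. simpl code. step_simpl. Qed.

Lemma step_evals_nil v K : step (st_evals 0 v K) = st_ret 0 K.
Proof. step_simpl. Qed.

Lemma step_evals_cons g gs v K :
  step (st_evals (ncons g gs) v K) = st_eval g v (ncons (fr_tail gs v) K).
Proof. step_simpl. Qed.

Lemma step_ret_tail y gs v K :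
  step (st_ret y (ncons (fr_tail gs v) K)) = st_evals gs v (ncons (fr_cons y) K).
Proof. step_simpl. Qed.

Lemma step_ret_cons ys y K : step (st_ret ys (ncons (fr_cons y) K)) = st_ret (ncons y ys) K.
Proof. step_simpl. Qed.

Lemma step_ret_comp ys f K : step (st_ret ys (ncons (fr_comp f) K)) = st_eval f ys K.
Proof. step_simpl. Qed.

Lemma step_ret_prim_done r g N w K : step (st_ret r (ncons (fr_prim g N N w) K)) = st_ret r K.
Proof. step_simpl. rewrite Nat.sub_diag. reflexivity. Qed.

Lemma step_ret_prim r g k N w K : k <> N ->
  step (st_ret r (ncons (fr_prim g k N w) K))
  = st_eval g (ncons k (ncons r w)) (ncons (fr_prim g (S k) N w) K).
Proof. intros H. step_simpl. destruct (k - N + (N - k)) eqn:E; [lia | reflexivity]. Qed.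

Lemma step_ret_mu_found f m v K : step (st_ret 0 (ncons (fr_mu f m v) K)) = st_ret m K.
Proof. step_simpl. Qed.

Lemma step_ret_mu_next y f m v K :
  step (st_ret (S y) (ncons (fr_mu f m v) K))
  = st_eval f (ncons (S m) v) (ncons (fr_mu f (S m) v) K).
Proof. step_simpl. Qed.

Lemma step_ret_empty y : step (st_ret y 0) = st_ret y 0.
Proof. step_simpl. Qed.

Lemma halted_ret_empty y : halted (st_ret y 0) = 1.
Proof. step_simpl. Qed.

Lemma halted_eval t v K : halted (st_eval t v K) = 0.
Proof. step_simpl. Qed.

Lemma halted_evals gs v K : halted (st_evals gs v K) = 0.
Proof. step_simpl. Qed.

Lemma halted_ret_frame y x K : halted (st_ret y (ncons x K)) = 0.
Proof. step_simpl. Qed.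

Lemma halted_step s : halted s = 1 -> step s = s.
Proof.
  unfold halted, ifeq. rewrite <- (npair_surj s), <- (npair_surj (nsnd s)).
  rewrite !nfst_npair, !nsnd_npair.
  destruct (nfst s - 1 + (1 - nfst s)) eqn:E; [|discriminate]. cbn [ifz].
  destruct (nsnd (nsnd s)) eqn:E2; [|discriminate]. intros _.
  replace (nfst s) with 1 by lia. apply step_ret_empty.
Qed.

Lemma run_S n s : run (S n) s = run n (step s).
Proof. revert s; induction n; intros s; simpl in *; auto. Qed.

Lemma run_add a b s : run (a + b) s = run a (run b s).
Proof. induction a; simpl; auto. Qed.

Lemma run_seq a b s s1 s2 : run a s = s1 -> run b s1 = s2 -> run (b + a) s = s2.
Proof. intros; subst; apply run_add. Qed.

Lemma run_step_seq b s s1 s2 : step s = s1 -> run b s1 = s2 -> run (b + 1) s = s2.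
Proof. apply (run_seq 1). Qed.

Lemma halted_run_mono n m s : halted (run n s) = 1 -> n <= m -> halted (run m s) = 1.
Proof.
  intros H Hl. replace m with ((m - n) + n) by lia. rewrite run_add.
  induction (m - n); simpl; auto. rewrite halted_step; auto.
Qed.

Definition reaches s s' := exists j, run j s = s'.

Lemma reaches_refl s : reaches s s.
Proof. exists 0; reflexivity. Qed.

Lemma reaches_step s s1 s2 : step s = s1 -> reaches s1 s2 -> reaches s s2.
Proof. intros H [j Hj]. exists (j + 1). eapply run_seq; eauto. Qed.

Lemma reaches_trans s s1 s2 : reaches s s1 -> reaches s1 s2 -> reaches s s2.
Proof. intros [a Ha] [b Hb]. exists (b + a). eapply run_seq; eauto. Qed.

(** For a primitive recursion the induction also needs the behaviour of the
    loop started at the base case and stopped at any later bound [N]. *)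
Definition reaches_result t v y :=
  (forall K, reaches (st_eval (code t) (code_list v) K) (st_ret y K)) /\
  match t, v with
  | PPrim f g, n :: w => forall N K, n <= N ->
      reaches (st_eval (code f) (code_list w) (ncons (fr_prim (code g) 0 N (code_list w)) K))
              (st_ret y (ncons (fr_prim (code g) n N (code_list w)) K))
  | _, _ => True
  end.

Lemma eval_reaches t v y : eval t v y -> reaches_result t v y.
Proof.
  revert t v y.
  apply (eval_mut_ind reaches_result (fun gs v ys => forall K,
           reaches (st_evals (code_list (map code gs)) (code_list v) K) (st_ret (code_list ys) K)));
    unfold reaches_result.
  - split; auto. intros K. eapply reaches_step; [apply step_zero | apply reaches_refl].
  - split; auto. intros K. eapply reaches_step; [apply step_succ|].
    rewrite nhead_code_list. apply reaches_refl.
  - split; auto. intros K. eapply reaches_step; [apply step_proj|].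
    rewrite nnth_code_list. apply reaches_refl.
  - intros f gs v ys y _ Hgs _ [Hf _]. split; auto. intros K.
    eapply reaches_step; [apply step_comp|]. eapply reaches_trans; [apply Hgs|].
    eapply reaches_step; [apply step_ret_comp | apply Hf].
  - intros f g v y _ [Hf _]. split.
    + intros K. eapply reaches_step; [apply step_prim|]. eapply reaches_trans; [apply Hf|].
      eapply reaches_step; [apply step_ret_prim_done | apply reaches_refl].
    + intros N K _. apply Hf.
  - intros f g n v r y _ [_ Hr] _ [Hg _]. simpl in Hr. split.
    + intros K. eapply reaches_step; [apply step_prim|]. eapply reaches_trans; [apply Hr; lia|].
      eapply reaches_step; [apply step_ret_prim; lia|]. eapply reaches_trans; [apply Hg|].
      eapply reaches_step; [apply step_ret_prim_done | apply reaches_refl].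
    + intros N K HN. eapply reaches_trans; [apply Hr; lia|].
      eapply reaches_step; [apply step_ret_prim; lia | apply Hg].
  - intros f v n _ [Hzero _] Hlt. split; auto. intros K.
    eapply reaches_step; [apply step_mu|].
    assert (Hsearch : forall m, m <= n ->
      reaches (st_eval (code f) (ncons 0 (code_list v)) (ncons (fr_mu (code f) 0 (code_list v)) K))
              (st_eval (code f) (ncons m (code_list v)) (ncons (fr_mu (code f) m (code_list v)) K))).
    { induction m; intros Hm; [apply reaches_refl|].
      eapply reaches_trans; [apply IHm; lia|].
      destruct (Hlt m) as [k [_ [Hk _]]]; [lia|].
      eapply reaches_trans; [apply Hk|].
      eapply reaches_step; [apply step_ret_mu_next | apply reaches_refl]. }
    eapply reaches_trans; [apply Hsearch; auto|]. eapply reaches_trans; [apply Hzero|].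
    eapply reaches_step; [apply step_ret_mu_found | apply reaches_refl].
  - intros v K. eapply reaches_step; [apply step_evals_nil | apply reaches_refl].
  - intros g gs v y ys _ [Hg _] _ Hgs K.
    eapply reaches_step; [apply step_evals_cons|]. eapply reaches_trans; [apply Hg|].
    eapply reaches_step; [apply step_ret_tail|]. eapply reaches_trans; [apply Hgs|].
    eapply reaches_step; [apply step_ret_cons | apply reaches_refl].
Qed.

Definition halts_within n s := halted (run n s) = 1.

Lemma halts_within_next n s s' :
  halted s = 0 -> step s = s' -> halts_within n s -> exists n', n = S n' /\ halts_within n' s'.
Proof.
  unfold halts_within. intros H0 Hs H. destruct n as [|n']; [simpl in H; congruence|].
  rewrite run_S, Hs in H. eauto.
Qed.

Lemma halts_within_run j n s s' :
  run j s = s' -> j <= n -> halts_within n s -> halts_within (n - j) s'.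
Proof.
  unfold halts_within. intros H1 H2 H3. subst. rewrite <- run_add.
  replace (n - j + j) with n by lia. auto.
Qed.

Lemma loop_not_halts n s : step s = s -> halted s = 0 -> ~ halts_within n s.
Proof.
  unfold halts_within. intros H1 H2.
  assert (run n s = s) as ->; [induction n; simpl; auto; rewrite IHn; auto | congruence].
Qed.

Definition sound_eval n := forall t v K,
  halts_within n (st_eval (code t) (code_list v) K) ->
  exists y j, j <= n /\ eval t v y /\ run j (st_eval (code t) (code_list v) K) = st_ret y K.

Definition sound_evals n := forall gs v K,
  halts_within n (st_evals (code_list (map code gs)) (code_list v) K) ->
  exists ys j, j <= n /\ evals gs v ys /\
    run j (st_evals (code_list (map code gs)) (code_list v) K) = st_ret (code_list ys) K.

Definition sound_prim n := forall f g w k N r K,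
  eval (PPrim f g) (k :: w) r -> k <= N ->
  halts_within n (st_ret r (ncons (fr_prim (code g) k N (code_list w)) K)) ->
  exists y j, j <= n /\ eval (PPrim f g) (N :: w) y /\
    run j (st_ret r (ncons (fr_prim (code g) k N (code_list w)) K)) = st_ret y K.

Definition sound_mu n := forall f v m r K,
  eval f (m :: v) r -> (forall m', m' < m -> exists k, eval f (m' :: v) (S k)) ->
  halts_within n (st_ret r (ncons (fr_mu (code f) m (code_list v)) K)) ->
  exists y j, j <= n /\ eval (PMu f) v y /\
    run j (st_ret r (ncons (fr_mu (code f) m (code_list v)) K)) = st_ret y K.

Section Soundness.
Variable n : nat.
Hypothesis IH_eval : forall m, m < n -> sound_eval m.
Hypothesis IH_evals : forall m, m < n -> sound_evals m.
Hypothesis IH_prim : forall m, m < n -> sound_prim m.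
Hypothesis IH_mu : forall m, m < n -> sound_mu m.

Lemma sound_eval_step : sound_eval n.
Proof.
  intros t v K H.
  destruct t as [ | | i | f gs | f g | f].
  - destruct (halts_within_next _ _ _ (halted_eval _ _ _) (step_zero _ _) H) as [n' [-> _]].
    exists 0, 1. split; [lia|]. split; [constructor | apply step_zero].
  - destruct (halts_within_next _ _ _ (halted_eval _ _ _) (step_succ _ _) H) as [n' [-> _]].
    exists (S (hd 0 v)), 1. split; [lia|]. split; [constructor|].
    rewrite <- nhead_code_list. apply step_succ.
  - destruct (halts_within_next _ _ _ (halted_eval _ _ _) (step_proj _ _ _) H) as [n' [-> _]].
    exists (nth i v 0), 1. split; [lia|]. split; [constructor|].
    rewrite <- nnth_code_list. apply step_proj.
  - destruct (halts_within_next _ _ _ (halted_eval _ _ _) (step_comp _ _ _ _) H) as [n1 [-> H1]].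
    destruct (IH_evals n1 ltac:(lia) _ _ _ H1) as [ys [j1 [Hj1 [Hys Hrun1]]]].
    pose proof (halts_within_run _ _ _ _ Hrun1 Hj1 H1) as H2.
    destruct (halts_within_next _ _ _ (halted_ret_frame _ _ _) (step_ret_comp _ _ _) H2)
      as [n2 [E2 H3]].
    destruct (IH_eval n2 ltac:(lia) _ _ _ H3) as [y [j2 [Hj2 [Hy Hrun2]]]].
    exists y, (j2 + 1 + (j1 + 1)). split; [lia|]. split; [econstructor; eauto|].
    eapply run_seq; [eapply run_step_seq; [apply step_comp | exact Hrun1]|].
    eapply run_step_seq; [apply step_ret_comp | exact Hrun2].
  - destruct v as [|k w].
    { exfalso. eapply loop_not_halts; [apply step_prim_nil | apply halted_eval | exact H]. }
    destruct (halts_within_next _ _ _ (halted_eval _ _ _) (step_prim _ _ _ _ _) H) as [n1 [-> H1]].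
    destruct (IH_eval n1 ltac:(lia) _ _ _ H1) as [r [j1 [Hj1 [Hr Hrun1]]]].
    pose proof (halts_within_run _ _ _ _ Hrun1 Hj1 H1) as H2.
    destruct (IH_prim (n1 - j1) ltac:(lia) f g w 0 k r K (ev_prim0 g Hr) ltac:(lia) H2)
      as [y [j2 [Hj2 [Hy Hrun2]]]].
    exists y, (j2 + (j1 + 1)). split; [lia|]. split; auto.
    eapply run_seq; [eapply run_step_seq; [apply step_prim | exact Hrun1] | exact Hrun2].
  - destruct (halts_within_next _ _ _ (halted_eval _ _ _) (step_mu _ _ _) H) as [n1 [-> H1]].
    destruct (IH_eval n1 ltac:(lia) f (0 :: v) _ H1) as [r [j1 [Hj1 [Hr Hrun1]]]].
    pose proof (halts_within_run _ _ _ _ Hrun1 Hj1 H1) as H2.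
    destruct (IH_mu (n1 - j1) ltac:(lia) f v 0 r K Hr ltac:(intros; lia) H2)
      as [y [j2 [Hj2 [Hy Hrun2]]]].
    exists y, (j2 + (j1 + 1)). split; [lia|]. split; auto.
    eapply run_seq; [eapply run_step_seq; [apply step_mu | exact Hrun1] | exact Hrun2].
Qed.

Lemma sound_evals_step : sound_evals n.
Proof.
  intros [|g gs] v K H.
  - destruct (halts_within_next _ _ _ (halted_evals _ _ _) (step_evals_nil _ _) H) as [n' [-> _]].
    exists [], 1. split; [lia|]. split; [constructor | apply step_evals_nil].
  - destruct (halts_within_next _ _ _ (halted_evals _ _ _) (step_evals_cons _ _ _ _) H)
      as [n1 [-> H1]].
    destruct (IH_eval n1 ltac:(lia) _ _ _ H1) as [y [j1 [Hj1 [Hy Hrun1]]]].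
    pose proof (halts_within_run _ _ _ _ Hrun1 Hj1 H1) as H2.
    destruct (halts_within_next _ _ _ (halted_ret_frame _ _ _) (step_ret_tail _ _ _ _) H2)
      as [n2 [E2 H3]].
    destruct (IH_evals n2 ltac:(lia) _ _ _ H3) as [ys [j2 [Hj2 [Hys Hrun2]]]].
    pose proof (halts_within_run _ _ _ _ Hrun2 Hj2 H3) as H4.
    destruct (halts_within_next _ _ _ (halted_ret_frame _ _ _) (step_ret_cons _ _ _) H4)
      as [n3 [E3 _]].
    exists (y :: ys), (1 + (j2 + 1 + (j1 + 1))). split; [lia|]. split; [constructor; auto|].
    eapply run_seq; [eapply run_seq; [eapply run_step_seq; [apply step_evals_cons | exact Hrun1]|]|].
    + eapply run_step_seq; [apply step_ret_tail | exact Hrun2].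
    + apply step_ret_cons.
Qed.

Lemma sound_prim_step : sound_prim n.
Proof.
  intros f g w k N r K Hr Hk H.
  destruct (Nat.eq_dec k N) as [<-|Hne].
  - destruct (halts_within_next _ _ _ (halted_ret_frame _ _ _) (step_ret_prim_done _ _ _ _ _) H)
      as [n' [-> _]].
    exists r, 1. split; [lia|]. split; [auto | apply step_ret_prim_done].
  - destruct (halts_within_next _ _ _ (halted_ret_frame _ _ _) (step_ret_prim r _ _ _ _ K Hne) H)
      as [n1 [-> H1]].
    destruct (IH_eval n1 ltac:(lia) g (k :: r :: w) _ H1) as [r' [j1 [Hj1 [Hr' Hrun1]]]].
    pose proof (halts_within_run _ _ _ _ Hrun1 Hj1 H1) as H2.
    destruct (IH_prim (n1 - j1) ltac:(lia) f g w (S k) N r' K (ev_primS Hr Hr') ltac:(lia) H2)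
      as [y [j2 [Hj2 [Hy Hrun2]]]].
    exists y, (j2 + (j1 + 1)). split; [lia|]. split; auto.
    eapply run_seq; [eapply run_step_seq; [apply step_ret_prim; auto | exact Hrun1] | exact Hrun2].
Qed.

Lemma sound_mu_step : sound_mu n.
Proof.
  intros f v m [|r] K Hr Hlt H.
  - destruct (halts_within_next _ _ _ (halted_ret_frame _ _ _) (step_ret_mu_found _ _ _ _) H)
      as [n' [-> _]].
    exists m, 1. split; [lia|]. split; [constructor; auto | apply step_ret_mu_found].
  - destruct (halts_within_next _ _ _ (halted_ret_frame _ _ _) (step_ret_mu_next _ _ _ _ _) H)
      as [n1 [-> H1]].
    destruct (IH_eval n1 ltac:(lia) f (S m :: v) _ H1) as [r' [j1 [Hj1 [Hr' Hrun1]]]].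
    pose proof (halts_within_run _ _ _ _ Hrun1 Hj1 H1) as H2.
    assert (Hlt' : forall m', m' < S m -> exists k, eval f (m' :: v) (S k)).
    { intros m' Hm'. destruct (Nat.eq_dec m' m) as [->|]; [eauto | apply Hlt; lia]. }
    destruct (IH_mu (n1 - j1) ltac:(lia) f v (S m) r' K Hr' Hlt' H2)
      as [y [j2 [Hj2 [Hy Hrun2]]]].
    exists y, (j2 + (j1 + 1)). split; [lia|]. split; auto.
    eapply run_seq; [eapply run_step_seq; [apply step_ret_mu_next | exact Hrun1] | exact Hrun2].
Qed.

End Soundness.

Lemma sound_eval_all n : sound_eval n.
Proof.
  enough (sound_eval n /\ sound_evals n /\ sound_prim n /\ sound_mu n) by tauto.
  induction n as [n IH] using lt_wf_ind.
  split; [|split; [|split]];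
    [apply sound_eval_step | apply sound_evals_step | apply sound_prim_step | apply sound_mu_step];
    intros m Hm; apply (IH m Hm).
Qed.

Theorem halts_iff_machine_halts t v :
  (exists y, eval t v y) <-> exists n, halted (run n (st_eval (code t) (code_list v) 0)) = 1.
Proof.
  split.
  - intros [y Hy]. destruct (proj1 (eval_reaches _ _ _ Hy) 0) as [j Hj].
    exists j. rewrite Hj. apply halted_ret_empty.
  - intros [n Hn]. destruct (sound_eval_all n t v 0 Hn) as [y [_ [_ [Hy _]]]]. eauto.
Qed.

Definition eStEval t v K := ePair (enum 0) (ePair t (ePair v K)).
Definition eStRet y K := ePair (enum 1) (ePair y K).
Definition eStEvals gs v K := ePair (enum 2) (ePair gs (ePair v K)).
Definition eFrTail gs v := ePair (enum 0) (ePair gs v).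
Definition eFrCons y := ePair (enum 1) y.
Definition eFrComp f := ePair (enum 2) f.
Definition eFrPrim g k N w := ePair (enum 3) (ePair g (ePair k (ePair N w))).
Definition eFrMu f m v := ePair (enum 4) (ePair f (ePair m v)).
Definition eIfeq x y a b := eIfz (eAdd (eSub x y) (eSub y x)) a b.

Lemma den_eStEval t v K e : den (eStEval t v K) e = st_eval (den t e) (den v e) (den K e).
Proof. unfold eStEval. den_simpl. reflexivity. Qed.
Lemma den_eStRet y K e : den (eStRet y K) e = st_ret (den y e) (den K e).
Proof. unfold eStRet. den_simpl. reflexivity. Qed.
Lemma den_eStEvals gs v K e : den (eStEvals gs v K) e = st_evals (den gs e) (den v e) (den K e).
Proof. unfold eStEvals. den_simpl. reflexivity. Qed.
Lemma den_eFrTail gs v e : den (eFrTail gs v) e = fr_tail (den gs e) (den v e).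
Proof. unfold eFrTail. den_simpl. reflexivity. Qed.
Lemma den_eFrCons y e : den (eFrCons y) e = fr_cons (den y e).
Proof. unfold eFrCons. den_simpl. reflexivity. Qed.
Lemma den_eFrComp f e : den (eFrComp f) e = fr_comp (den f e).
Proof. unfold eFrComp. den_simpl. reflexivity. Qed.
Lemma den_eFrPrim g k N w e :
  den (eFrPrim g k N w) e = fr_prim (den g e) (den k e) (den N e) (den w e).
Proof. unfold eFrPrim. den_simpl. reflexivity. Qed.
Lemma den_eFrMu f m v e : den (eFrMu f m v) e = fr_mu (den f e) (den m e) (den v e).
Proof. unfold eFrMu. den_simpl. reflexivity. Qed.
Lemma den_eIfeq x y a b e : den (eIfeq x y a b) e = ifeq (den x e) (den y e) (den a e) (den b e).
Proof. unfold eIfeq. den_simpl. reflexivity. Qed.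

Global Opaque eStEval eStRet eStEvals eFrTail eFrCons eFrComp eFrPrim eFrMu eIfeq.
Hint Rewrite den_eStEval den_eStRet den_eStEvals den_eFrTail den_eFrCons den_eFrComp
  den_eFrPrim den_eFrMu den_eIfeq : den.

Definition eStepEval s t v K :=
  let op := eFst t in let arg := eSnd t in
  eIfz op (eStRet EZero K)
  (eIfeq op (enum 1) (eStRet (ESucc (eHead v)) K)
  (eIfeq op (enum 2) (eStRet (eNth arg v) K)
  (eIfeq op (enum 3) (eStEvals (eSnd arg) v (eCons (eFrComp (eFst arg)) K))
  (eIfeq op (enum 4)
     (eIfz v s (eStEval (eFst arg) (eTail v)
                         (eCons (eFrPrim (eSnd arg) EZero (eHead v) (eTail v)) K)))
  (eIfeq op (enum 5) (eStEval arg (eCons EZero v) (eCons (eFrMu arg EZero v) K))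
  s))))).

Definition eStepRet s y K :=
  let fr := eHead K in let K' := eTail K in let op := eFst fr in let arg := eSnd fr in
  let g := eFst arg in let k := eFst (eSnd arg) in let v := eSnd (eSnd arg) in
  let N := eFst v in let w := eSnd v in
  eIfz K s
  (eIfz op (eStEvals (eFst arg) (eSnd arg) (eCons (eFrCons y) K'))
  (eIfeq op (enum 1) (eStRet (eCons arg y) K')
  (eIfeq op (enum 2) (eStEval arg y K')
  (eIfeq op (enum 3)
     (eIfeq k N (eStRet y K') (eStEval g (eCons k (eCons y w)) (eCons (eFrPrim g (ESucc k) N w) K')))
  (eIfeq op (enum 4)
     (eIfz y (eStRet k K') (eStEval g (eCons (ESucc k) v) (eCons (eFrMu g (ESucc k) v) K')))
  s))))).

Definition eStepEvals gs v K :=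
  eIfz gs (eStRet EZero K) (eStEval (eHead gs) v (eCons (eFrTail (eTail gs) v) K)).

Lemma den_eStepEval s t v K e :
  den (eStepEval s t v K) e = step_eval (den s e) (den t e) (den v e) (den K e).
Proof. unfold eStepEval. den_simpl. reflexivity. Qed.

Lemma den_eStepRet s y K e : den (eStepRet s y K) e = step_ret (den s e) (den y e) (den K e).
Proof. unfold eStepRet. den_simpl. reflexivity. Qed.

Lemma den_eStepEvals gs v K e : den (eStepEvals gs v K) e = step_evals (den gs e) (den v e) (den K e).
Proof. unfold eStepEvals. den_simpl. reflexivity. Qed.

Global Opaque eStepEval eStepRet eStepEvals.
Hint Rewrite den_eStepEval den_eStepRet den_eStepEvals : den.

Definition eStep a :=
  ECall1 (let s := V0 in let op := eFst V0 in let p := eSnd V0 in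
          eIfz op (eStepEval s (eFst p) (eFst (eSnd p)) (eSnd (eSnd p)))
          (eIfeq op (enum 1) (eStepRet s (eFst p) (eSnd p))
          (eIfeq op (enum 2) (eStepEvals (eFst p) (eFst (eSnd p)) (eSnd (eSnd p)))
          s))) a.

Definition eHalted a :=
  ECall1 (eIfeq (eFst V0) (enum 1) (eIfz (eSnd (eSnd V0)) (enum 1) EZero) EZero) a.

Definition eRun n a := ERec V0 (eStep V1) n a.

Lemma den_eStep a e : den (eStep a) e = step (den a e).
Proof. unfold eStep. den_simpl. reflexivity. Qed.

Lemma den_eHalted a e : den (eHalted a) e = halted (den a e).
Proof. unfold eHalted. den_simpl. reflexivity. Qed.

Global Opaque eStep eHalted.
Hint Rewrite den_eStep den_eHalted : den.

Lemma den_eRun n a e : den (eRun n a) e = run (den n e) (den a e).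
Proof.
  unfold eRun, run. cbn [den nth].
  induction (den n e) as [|k IH]; cbn [nat_rect]; auto. rewrite IH. den_simpl. reflexivity.
Qed.

Global Opaque eRun.
Hint Rewrite den_eRun : den.

(** * Sylvester's sequence *)

Definition sylvester k := nat_rect _ 2 (fun _ r => r * (r - 1) + 1) k.

Lemma sylvester_S k : sylvester (S k) = sylvester k * (sylvester k - 1) + 1.
Proof. reflexivity. Qed.

Lemma sylvester_ge2 k : 2 <= sylvester k.
Proof. induction k; [simpl; auto | rewrite sylvester_S; nia]. Qed.

Lemma sylvester_dvd_pred j k : j < k -> Nat.divide (sylvester j) (sylvester k - 1).
Proof.
  induction k; intros H; [lia|].
  rewrite sylvester_S, Nat.add_sub.
  destruct (Nat.eq_dec j k) as [->|]; [apply Nat.divide_factor_l|].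
  apply Nat.divide_mul_r, IHk. lia.
Qed.

Lemma sylvester_coprime j k : j <> k -> Nat.gcd (sylvester j) (sylvester k) = 1.
Proof.
  assert (Hlt : forall a b, a < b -> Nat.gcd (sylvester a) (sylvester b) = 1).
  { intros a b Hab. apply Nat.divide_1_r.
    pose proof (sylvester_ge2 b).
    replace 1 with (sylvester b - (sylvester b - 1)) by lia.
    apply Nat.divide_sub_r; [apply Nat.gcd_divide_r|].
    eapply Nat.divide_trans; [apply Nat.gcd_divide_l | apply sylvester_dvd_pred; auto]. }
  intros H. destruct (Nat.lt_total j k) as [|[|]]; [auto | lia |].
  rewrite Nat.gcd_comm. auto.
Qed.

Definition prod_upto (g : nat -> nat) n := nat_rect _ 1 (fun k r => r * g k) n.

Lemma prod_upto_S g n : prod_upto g (S n) = prod_upto g n * g n.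
Proof. reflexivity. Qed.

Lemma prod_upto_pos g n : (forall k, k < n -> 1 <= g k) -> 1 <= prod_upto g n.
Proof.
  induction n; intros H; [simpl; auto|]. rewrite prod_upto_S.
  pose proof (IHn ltac:(intros; apply H; lia)). specialize (H n ltac:(lia)). nia.
Qed.

Lemma prod_upto_dvd g h n :
  (forall k, k < n -> Nat.divide (g k) (h k)) -> Nat.divide (prod_upto g n) (prod_upto h n).
Proof.
  induction n; intros H; [apply Nat.divide_refl|]. rewrite !prod_upto_S.
  apply Nat.divide_trans with (prod_upto h n * g n).
  - apply Nat.mul_divide_mono_r, IHn. auto.
  - apply Nat.mul_divide_mono_l, H. lia.
Qed.

Lemma dvd_prod_upto g n k : k < n -> Nat.divide (g k) (prod_upto g n).
Proof.
  induction n; intros H; [lia|]. rewrite prod_upto_S.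
  destruct (Nat.eq_dec k n) as [->|]; [apply Nat.divide_factor_r|].
  apply Nat.divide_mul_l, IHn. lia.
Qed.

Lemma not_dvd_prod_upto a g n :
  2 <= a -> (forall k, k < n -> Nat.gcd a (g k) = 1) -> ~ Nat.divide a (prod_upto g n).
Proof.
  intros Ha. induction n; intros H Hd.
  - apply Nat.divide_1_r in Hd. lia.
  - rewrite prod_upto_S, Nat.mul_comm in Hd. apply Nat.gauss in Hd; [|apply H; lia].
    apply IHn; auto.
Qed.

Section SylvesterProd.
Variable b : nat -> nat -> bool.
Hypothesis b_mono : forall k t t', b k t = true -> t <= t' -> b k t' = true.

Definition sylvester_factor k t := if b k t then sylvester k else 1.
Definition sylvester_prod t := prod_upto (fun k => sylvester_factor k t) t.

Lemma sylvester_prod_pos t : 1 <= sylvester_prod t.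
Proof.
  apply prod_upto_pos. intros k _. unfold sylvester_factor.
  destruct (b k t); [pose proof (sylvester_ge2 k)|]; lia.
Qed.

Lemma sylvester_prod_mono t t' : t <= t' -> Nat.divide (sylvester_prod t) (sylvester_prod t').
Proof.
  induction 1; [apply Nat.divide_refl|].
  eapply Nat.divide_trans; [exact IHle|]. unfold sylvester_prod.
  rewrite prod_upto_S. apply Nat.divide_mul_l, prod_upto_dvd.
  intros k _. unfold sylvester_factor. destruct (b k m) eqn:E.
  - rewrite (b_mono k m (S m)); auto. apply Nat.divide_refl.
  - apply Nat.divide_1_l.
Qed.

Lemma sylvester_dvd_prod_iff k :
  (exists t, Nat.divide (sylvester k) (sylvester_prod t)) <-> exists t, b k t = true.
Proof.
  split.
  - intros [t Ht]. destruct (b k t) eqn:E; eauto.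
    exfalso. revert Ht. apply not_dvd_prod_upto; [apply sylvester_ge2|].
    intros j _. unfold sylvester_factor.
    destruct (Nat.eq_dec j k) as [->|]; [rewrite E; apply Nat.divide_1_r, Nat.gcd_divide_r|].
    destruct (b j t); [apply sylvester_coprime; auto | apply Nat.divide_1_r, Nat.gcd_divide_r].
  - intros [t Ht]. exists (Nat.max t (S k)).
    replace (sylvester k) with (sylvester_factor k (Nat.max t (S k))).
    + apply (dvd_prod_upto (fun j => sylvester_factor j (Nat.max t (S k)))). lia.
    + unfold sylvester_factor. rewrite (b_mono k t); auto. lia.
Qed.
End SylvesterProd.

(** * The groups *)

Definition zc (z : Z) : Qc := Q2Qc (inject_Z z).
Definition nc (k : nat) : Qc := zc (Z.of_nat k).

Lemma zc_add a b : zc (a + b) = (zc a + zc b)%Qc.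
Proof.
  unfold zc, Qcplus. apply Q2Qc_eq_iff. cbn [this Q2Qc].
  rewrite !Qred_correct, inject_Z_plus. reflexivity.
Qed.

Lemma zc_mul a b : zc (a * b) = (zc a * zc b)%Qc.
Proof.
  unfold zc, Qcmult. apply Q2Qc_eq_iff. cbn [this Q2Qc].
  rewrite !Qred_correct, inject_Z_mult. reflexivity.
Qed.

Lemma zc_opp a : zc (- a) = (- zc a)%Qc.
Proof.
  unfold zc, Qcopp. apply Q2Qc_eq_iff. cbn [this Q2Qc].
  rewrite !Qred_correct, inject_Z_opp. reflexivity.
Qed.

Lemma zc_sub a b : zc (a - b) = (zc a - zc b)%Qc.
Proof. unfold Z.sub, Qcminus. rewrite zc_add, zc_opp. reflexivity. Qed.

Lemma zc_inj a b : zc a = zc b -> a = b.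
Proof. intros H. apply Q2Qc_eq_iff in H. unfold Qeq in H; simpl in H; lia. Qed.

Lemma zc_neq0 z : z <> 0%Z -> zc z <> 0%Qc.
Proof. intros H E. apply H, zc_inj. rewrite E. reflexivity. Qed.

Lemma nc_add a b : nc (a + b) = (nc a + nc b)%Qc.
Proof. unfold nc. rewrite Nat2Z.inj_add. apply zc_add. Qed.

Lemma nc_mul a b : nc (a * b) = (nc a * nc b)%Qc.
Proof. unfold nc. rewrite Nat2Z.inj_mul. apply zc_mul. Qed.

Lemma nc_S k : nc (S k) = (1 + nc k)%Qc.
Proof. replace (S k) with (1 + k) by lia. apply nc_add. Qed.

Lemma nc_cancel n a b : 1 <= n -> (nc n * a = nc n * b)%Qc -> a = b.
Proof.
  intros Hn H. assert (Hz : nc n <> 0%Qc) by (apply zc_neq0; lia).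
  replace a with (/ nc n * (nc n * a))%Qc by (field; auto).
  rewrite H. field; auto.
Qed.

(** [W] is the group of the bijections [(i, j, q) |-> (i + a, j + f i, q + h i j)]
    of [Z * Z * Qc] under composition: [wmul x y] is [x] after [y]. *)
Record W := mkW { wa : Z; wf : Z -> Z; wh : Z -> Z -> Qc }.

Definition wmul (x y : W) : W :=
  mkW (wa x + wa y)%Z (fun i => wf y i + wf x (i + wa y))%Z
      (fun i j => wh y i j + wh x (i + wa y)%Z (j + wf y i)%Z)%Qc.
Definition wone : W := mkW 0%Z (fun _ => 0%Z) (fun _ _ => 0%Qc).
Definition winv (x : W) : W :=
  mkW (- wa x)%Z (fun i => - wf x (i - wa x))%Z
      (fun i j => - wh x (i - wa x)%Z (j - wf x (i - wa x))%Z)%Qc.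

Lemma W_ext x y :
  wa x = wa y -> (forall i, wf x i = wf y i) -> (forall i j, wh x i j = wh y i j) -> x = y.
Proof.
  destruct x as [a f h], y as [a' f' h']; simpl; intros -> Hf Hh.
  apply functional_extensionality in Hf. subst.
  replace h with h'; [reflexivity|].
  apply functional_extensionality; intros i; apply functional_extensionality; auto.
Qed.

Lemma wmulA x y z : wmul x (wmul y z) = wmul (wmul x y) z.
Proof.
  apply W_ext; simpl; intros; [lia | |].
  - replace (i + wa z + wa y)%Z with (i + (wa y + wa z))%Z by lia; lia.
  - rewrite Qcplus_assoc. f_equal. f_equal; lia.
Qed.

Lemma wmul1l x : wmul wone x = x.
Proof. apply W_ext; simpl; intros; [lia | lia | apply Qcplus_0_r]. Qed.

Lemma wmul1r x : wmul x wone = x.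
Proof. apply W_ext; simpl; intros; rewrite ?Z.add_0_r; auto. apply Qcplus_0_l. Qed.

Lemma wmulVl x : wmul (winv x) x = wone.
Proof.
  apply W_ext; simpl; [lia | |]; intros i; replace (i + wa x - wa x)%Z with i by lia; [lia|].
  intros j. replace (j + wf x i - wf x i)%Z with j by lia. apply Qcplus_opp_r.
Qed.

Lemma wmulVr x : wmul x (winv x) = wone.
Proof.
  apply W_ext; simpl; [lia | |]; intros i; replace (i + - wa x)%Z with (i - wa x)%Z by lia; [lia|].
  intros j. replace (j + - wf x (i - wa x))%Z with (j - wf x (i - wa x))%Z by lia.
  rewrite Qcplus_comm. apply Qcplus_opp_r.
Qed.

Definition Wg : group := @Group W wmul wone winv wmulA wmul1l wmul1r wmulVl wmulVr.

Section GeneratedSubgroup.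
Variable G : group.
Variable S : list G.

Lemma in_gen_mul x y : in_gen S x -> in_gen S y -> in_gen S (gmul G x y).
Proof.
  induction 1; intros Hy.
  - rewrite gmul1l. auto.
  - rewrite <- gmulA. constructor; auto.
  - rewrite <- gmulA. apply gen_mulV; auto.
Qed.

Lemma in_gen_gen s : In s S -> in_gen S s.
Proof. intros H. rewrite <- (gmul1r G s). constructor; auto. constructor. Qed.

Lemma ginv_mul x y : ginv G (gmul G x y) = gmul G (ginv G y) (ginv G x).
Proof.
  rewrite <- (gmul1l G (gmul G (ginv G y) (ginv G x))), <- (gmulVl G (gmul G x y)).
  rewrite <- !gmulA, (gmulA G y), gmulVr, gmul1l, gmulVr, gmul1r. reflexivity.
Qed.

Lemma ginv_ginv x : ginv G (ginv G x) = x.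
Proof. rewrite <- (gmul1r G (ginv G (ginv G x))), <- (gmulVl G x), gmulA, gmulVl, gmul1l. auto. Qed.

Lemma ginv_one : ginv G (gone G) = gone G.
Proof. rewrite <- (gmul1l G (ginv G (gone G))). apply gmulVr. Qed.

Lemma in_gen_inv x : in_gen S x -> in_gen S (ginv G x).
Proof.
  induction 1.
  - rewrite ginv_one. constructor.
  - rewrite ginv_mul. apply in_gen_mul; auto.
    rewrite <- (gmul1r G (ginv G s)). apply gen_mulV; auto. constructor.
  - rewrite ginv_mul, ginv_ginv. apply in_gen_mul; auto. apply in_gen_gen; auto.
Qed.

Lemma in_gen_pow x k : in_gen S x -> in_gen S (gpow x k).
Proof. intros H. induction k; simpl; [constructor | apply in_gen_mul; auto]. Qed.

Definition gen_carrier := { x : G | in_gen S x }.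

Definition gen_mul (x y : gen_carrier) : gen_carrier :=
  exist _ (gmul G (proj1_sig x) (proj1_sig y)) (in_gen_mul _ _ (proj2_sig x) (proj2_sig y)).
Definition gen_one : gen_carrier := exist _ (gone G) (gen_one G S).
Definition gen_inv (x : gen_carrier) : gen_carrier :=
  exist _ (ginv G (proj1_sig x)) (in_gen_inv _ (proj2_sig x)).

Lemma gen_ext (x y : gen_carrier) : proj1_sig x = proj1_sig y -> x = y.
Proof. destruct x, y; simpl; intros; subst. f_equal. apply proof_irrelevance. Qed.

Lemma gen_mulA x y z : gen_mul x (gen_mul y z) = gen_mul (gen_mul x y) z.
Proof. apply gen_ext, gmulA. Qed.
Lemma gen_mul1l x : gen_mul gen_one x = x.
Proof. apply gen_ext, gmul1l. Qed.
Lemma gen_mul1r x : gen_mul x gen_one = x.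
Proof. apply gen_ext, gmul1r. Qed.
Lemma gen_mulVl x : gen_mul (gen_inv x) x = gen_one.
Proof. apply gen_ext, gmulVl. Qed.
Lemma gen_mulVr x : gen_mul x (gen_inv x) = gen_one.
Proof. apply gen_ext, gmulVr. Qed.

Definition gen_group : group :=
  @Group gen_carrier gen_mul gen_one gen_inv gen_mulA gen_mul1l gen_mul1r gen_mulVl gen_mulVr.

Lemma gen_group_pow (g : gen_group) k : proj1_sig (gpow g k) = gpow (proj1_sig g) k.
Proof. induction k; simpl; auto. rewrite IHk. auto. Qed.

Lemma gen_group_finitely_generated (L : list gen_group) :
  (forall s, In s S -> exists s', In s' L /\ proj1_sig s' = s) -> finitely_generated gen_group.
Proof.
  intros HL. exists L.
  enough (H : forall w, in_gen S w -> forall y : gen_group, proj1_sig y = w -> in_gen L y)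
    by (intros y; exact (H _ (proj2_sig y) y eq_refl)).
  induction 1 as [|s w Hs _ IH|s w Hs _ IH]; intros y Hy.
  - replace y with gen_one by (apply gen_ext; auto). constructor.
  - destruct (HL s Hs) as [s' [Hs' Es']].
    replace y with (gen_mul s' (gen_mul (gen_inv s') y))
      by (apply gen_ext; simpl; rewrite gmulA, gmulVr, gmul1l; reflexivity).
    constructor; auto. apply IH. simpl. rewrite Hy, Es', gmulA, gmulVl, gmul1l. reflexivity.
  - destruct (HL s Hs) as [s' [Hs' Es']].
    replace y with (gen_mul (gen_inv s') (gen_mul s' y))
      by (apply gen_ext; simpl; rewrite gmulA, gmulVl, gmul1l; reflexivity).
    apply gen_mulV; auto. apply IH. simpl. rewrite Hy, Es', gmulA, gmulVr, gmul1l. reflexivity.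
Qed.

End GeneratedSubgroup.

Definition line (d : Z) q :=
  mkW 0 (fun _ => 0%Z) (fun i _ => if Z.eq_dec i d then q else 0%Qc).
Definition column q := line 0 q.
Definition delta (d i : Z) : Z := if Z.eq_dec i d then 1 else 0.
Definition ga := mkW 1 (fun _ => 0%Z) (fun _ _ => 0%Qc).
Definition lamp (d : Z) := mkW 0 (delta d) (fun _ _ => 0%Qc).
Definition gb := lamp 0.

Lemma column_mul q1 q2 : wmul (column q1) (column q2) = column (q1 + q2).
Proof.
  apply W_ext; simpl; intros; [lia | lia |].
  destruct (Z.eq_dec i 0), (Z.eq_dec (i + 0) 0); try lia; ring.
Qed.

Lemma column_inv q : winv (column q) = column (- q).
Proof.
  apply W_ext; simpl; intros; [lia | lia |].
  destruct (Z.eq_dec i 0), (Z.eq_dec (i - 0) 0); try lia; ring.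
Qed.

Lemma column_0 : column 0 = wone.
Proof. apply W_ext; simpl; intros; auto. destruct (Z.eq_dec i 0); auto. Qed.

Lemma column_inj q q' : column q = column q' -> q = q'.
Proof. intros H. apply (f_equal (fun w => wh w 0%Z 0%Z)) in H. exact H. Qed.

Lemma wa_pow (w : Wg) k : wa (gpow w k) = (Z.of_nat k * wa w)%Z.
Proof. induction k; [reflexivity|]. cbn [gpow wa gmul Wg wmul]. rewrite IHk. lia. Qed.

Lemma wf_pow (w : Wg) k : wa w = 0%Z -> forall i, wf (gpow w k) i = (Z.of_nat k * wf w i)%Z.
Proof.
  intros Ha. induction k; intros i; [reflexivity|].
  cbn [gpow wf gmul Wg wmul]. rewrite IHk, wa_pow, Ha, Z.mul_0_r, Z.add_0_r. lia.
Qed.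

Lemma wh_pow (w : Wg) k : wa w = 0%Z -> (forall i, wf w i = 0%Z) ->
  forall i j, wh (gpow w k) i j = (nc k * wh w i j)%Qc.
Proof.
  intros Ha Hf. induction k; intros i j.
  - simpl. rewrite Qcmult_0_l. reflexivity.
  - cbn [gpow wh gmul Wg wmul]. rewrite IHk, wa_pow, wf_pow, Ha, Hf by auto.
    rewrite Z.mul_0_r, !Z.add_0_r, nc_S. ring.
Qed.

Lemma pow_column_root (w : Wg) k q : 1 <= k -> gpow w k = column q ->
  w = column (wh w 0%Z 0%Z) /\ q = (nc k * wh w 0%Z 0%Z)%Qc.
Proof.
  intros Hk H.
  assert (Ha : wa w = 0%Z).
  { apply (f_equal wa) in H. rewrite wa_pow in H. simpl in H. nia. }
  assert (Hf : forall i, wf w i = 0%Z).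
  { intros i. apply (f_equal (fun x => wf x i)) in H. rewrite wf_pow in H by auto. simpl in H. nia. }
  assert (Hh : forall i j, (nc k * wh w i j)%Qc = if Z.eq_dec i 0 then q else 0%Qc).
  { intros i j. rewrite <- wh_pow by auto. rewrite H. reflexivity. }
  split.
  - apply W_ext; auto. intros i j. simpl. apply (nc_cancel k); auto.
    rewrite Hh. destruct (Z.eq_dec i 0) as [->|]; [rewrite Hh; reflexivity | ring].
  - rewrite Hh. reflexivity.
Qed.

Lemma column_pow q k : gpow (G:=Wg) (column q) k = column (nc k * q).
Proof.
  apply W_ext.
  - rewrite wa_pow. simpl. lia.
  - intros i. rewrite wf_pow by reflexivity. simpl. lia.
  - intros i j. rewrite wh_pow by reflexivity. simpl.
    destruct (Z.eq_dec i 0); auto. apply Qcmult_0_r.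
Qed.

Lemma ga_pow k : gpow (G:=Wg) ga k = mkW (Z.of_nat k) (fun _ => 0%Z) (fun _ _ => 0%Qc).
Proof.
  induction k; [reflexivity|]. cbn [gpow gmul Wg]. rewrite IHk.
  apply W_ext; cbn [wa wf wh wmul ga]; intros; [lia | lia | apply Qcplus_0_l].
Qed.


Lemma conj_ga_pow_gb d :
  wmul (wmul (gpow (G:=Wg) ga d) gb) (winv (gpow (G:=Wg) ga d)) = lamp (Z.of_nat d).
Proof.
  rewrite ga_pow. apply W_ext; simpl; intros.
  - lia.
  - unfold delta. replace (i + - Z.of_nat d + Z.of_nat d)%Z with i by lia.
    destruct (Z.eq_dec (i + - Z.of_nat d) 0), (Z.eq_dec i (Z.of_nat d)); lia.
  - apply Qc_is_canon. reflexivity.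
Qed.

Lemma conj_ga_pow_line d q :
  wmul (wmul (winv (gpow (G:=Wg) ga d)) (line (Z.of_nat d) q)) (gpow (G:=Wg) ga d) = column q.
Proof.
  rewrite ga_pow. apply W_ext; simpl; intros; [lia | lia |].
  replace (i + Z.of_nat d - Z.of_nat d)%Z with i by lia.
  destruct (Z.eq_dec (i + Z.of_nat d) (Z.of_nat d)), (Z.eq_dec i 0); try lia; ring.
Qed.

Section Construction.
Variable Qf : nat -> nat.
Hypothesis Qf_pos : forall t, 1 <= Qf t.
Hypothesis Qf_mono : forall t t', t <= t' -> Nat.divide (Qf t) (Qf t').

Definition dvd_chain n := exists t, Nat.divide n (Qf t).

Definition weight (i : Z) : Qc :=
  if excluded_middle_informative ((1 <= i)%Z /\ dvd_chain (Z.to_nat i)) then / zc i else 0.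
Definition gc := mkW 0 (fun _ => 0%Z) (fun i j => weight i * zc j)%Qc.
Definition gens : list Wg := [ga; gb; gc].

Definition chain_frac q := exists t m, (nc (Qf t) * q)%Qc = zc m.

Lemma chain_frac_0 : chain_frac 0.
Proof. exists 0, 0%Z. apply Qcmult_0_r. Qed.

Lemma chain_frac_opp q : chain_frac q -> chain_frac (- q).
Proof. intros [t [m H]]. exists t, (- m)%Z. rewrite zc_opp, <- H. ring. Qed.

Lemma chain_frac_add q1 q2 : chain_frac q1 -> chain_frac q2 -> chain_frac (q1 + q2).
Proof.
  intros [t1 [m1 H1]] [t2 [m2 H2]]. set (t := Nat.max t1 t2).
  destruct (Qf_mono t1 t ltac:(lia)) as [c1 E1].
  destruct (Qf_mono t2 t ltac:(lia)) as [c2 E2].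
  exists t, (Z.of_nat c1 * m1 + Z.of_nat c2 * m2)%Z.
  rewrite zc_add, !zc_mul. fold (nc c1) (nc c2). rewrite <- H1, <- H2.
  rewrite Qcmult_plus_distr_r. rewrite E1 at 1. rewrite E2, !nc_mul. ring.
Qed.

Lemma chain_frac_weight i j : chain_frac (weight i * zc j).
Proof.
  unfold weight. destruct (excluded_middle_informative _) as [[Hi [t [c Hc]]]|_].
  - exists t, (Z.of_nat c * j)%Z. unfold nc. rewrite Hc, Nat2Z.inj_mul, Z2Nat.id by lia.
    rewrite !zc_mul. field. apply zc_neq0. lia.
  - rewrite Qcmult_0_l. apply chain_frac_0.
Qed.

Lemma in_gen_chain_frac w : in_gen gens w -> forall i j, chain_frac (wh w i j).
Proof.
  induction 1 as [|s w Hs _ IH|s w Hs _ IH]; intros i j; simpl.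
  - apply chain_frac_0.
  - apply chain_frac_add; auto.
    destruct Hs as [<-|[<-|[<-|[]]]]; simpl; auto using chain_frac_0, chain_frac_weight.
  - apply chain_frac_add; auto.
    destruct Hs as [<-|[<-|[<-|[]]]]; simpl; apply chain_frac_opp;
      auto using chain_frac_0, chain_frac_weight.
Qed.

Lemma weight_chain d : 1 <= d -> dvd_chain d -> weight (Z.of_nat d) = / nc d.
Proof.
  intros Hd HX. unfold weight. destruct (excluded_middle_informative _) as [_|Hn]; [reflexivity|].
  exfalso. apply Hn. rewrite Nat2Z.id. split; auto. lia.
Qed.

Lemma commutator_gc (z : Z) :
  wmul (wmul gc (lamp z)) (winv (wmul (lamp z) gc)) = line z (weight z).
Proof.
  assert (wmul gc (lamp z) = wmul (line z (weight z)) (wmul (lamp z) gc)) as ->.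
  { apply W_ext; cbn [wa wf wh wmul gc lamp line]; intros; rewrite ?Z.add_0_r.
    - reflexivity.
    - rewrite Z.add_0_l. reflexivity.
    - unfold delta. rewrite zc_add.
      destruct (Z.eq_dec i z) as [->|]; change (zc 1) with 1%Qc; change (zc 0) with 0%Qc; ring. }
  rewrite <- wmulA, wmulVr, wmul1r. reflexivity.
Qed.

(** The generator [gb] conjugated by [ga ^ d] has its unit at [d], so its
    commutator with [gc] picks out [weight d]. *)
Lemma column_inv_in_gen d : 1 <= d -> dvd_chain d -> in_gen gens (column (/ nc d)).
Proof.
  intros Hd HX.
  assert (Hga : in_gen gens (gpow (G:=Wg) ga d)) by (apply in_gen_pow, in_gen_gen; simpl; auto).
  assert (Hgb : in_gen gens gb) by (apply in_gen_gen; simpl; auto).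
  assert (Hgc : in_gen gens gc) by (apply in_gen_gen; simpl; auto).
  assert (Hb : in_gen gens (lamp (Z.of_nat d))).
  { rewrite <- conj_ga_pow_gb.
    apply (in_gen_mul Wg); [apply (in_gen_mul Wg); auto | apply (in_gen_inv Wg); auto]. }
  rewrite <- (weight_chain d Hd HX), <- (conj_ga_pow_line d), <- commutator_gc.
  repeat first [apply (in_gen_mul Wg) | apply (in_gen_inv Wg) | assumption].
Qed.

Definition Gchain : group := gen_group Wg gens.

Definition emb (x : Gchain) : Wg := proj1_sig x.

Lemma emb_inj x y : emb x = emb y -> x = y.
Proof. apply gen_ext. Qed.

Lemma emb_pow x k : emb (gpow x k) = gpow (emb x) k.
Proof. apply gen_group_pow. Qed.

Lemma dvd_chain_1 : dvd_chain 1.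
Proof. exists 0. apply Nat.divide_1_l. Qed.

Definition z : Gchain := exist _ (column 1) (column_inv_in_gen 1 (le_n 1) dvd_chain_1).

Lemma in_gen_z_iff (y : Gchain) : in_gen [z] y <-> exists m, emb y = column (zc m).
Proof.
  split.
  - induction 1 as [|s y Hs _ [m Hm]|s y Hs _ [m Hm]].
    + exists 0%Z. symmetry. apply column_0.
    + destruct Hs as [<-|[]]. exists (1 + m)%Z.
      change (wmul (column 1) (emb y) = column (zc (1 + m))).
      rewrite Hm, column_mul, zc_add. reflexivity.
    + destruct Hs as [<-|[]]. exists (-1 + m)%Z.
      change (wmul (winv (column 1)) (emb y) = column (zc (-1 + m))).
      rewrite Hm, column_inv, column_mul, zc_add. reflexivity.
  - intros [m Hm].
    assert (Hz : in_gen [z] z) by (apply in_gen_gen; left; reflexivity).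
    assert (Hpow : forall k, emb (gpow z k) = column (zc (Z.of_nat k))).
    { intros k. rewrite emb_pow. change (emb z) with (column 1). rewrite column_pow.
      f_equal. apply Qcmult_1_r. }
    destruct (Z.le_gt_cases 0 m).
    + replace y with (gpow z (Z.to_nat m)) by (apply emb_inj; rewrite Hpow, Hm, Z2Nat.id; auto).
      apply in_gen_pow, Hz.
    + replace y with (ginv Gchain (gpow z (Z.to_nat (- m)))).
      * apply in_gen_inv, in_gen_pow, Hz.
      * apply emb_inj. change (winv (emb (gpow z (Z.to_nat (- m)))) = emb y).
        rewrite Hpow, Hm, column_inv, Z2Nat.id, zc_opp, Qcopp_involutive by lia. reflexivity.
Qed.

Lemma Gchain_torsion_free : torsion_free Gchain.
Proof.
  intros g k Hk H. apply emb_inj. apply (f_equal emb) in H.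
  rewrite emb_pow in H. change (emb (gone Gchain)) with wone in *.
  rewrite <- column_0 in *.
  destruct (pow_column_root _ _ _ Hk H) as [Hg H0]. rewrite Hg. f_equal.
  apply (nc_cancel k); auto. rewrite <- H0. ring.
Qed.

Lemma Gchain_finitely_generated : finitely_generated Gchain.
Proof.
  apply (gen_group_finitely_generated Wg gens
           [exist _ ga (in_gen_gen Wg gens ga (or_introl eq_refl));
            exist _ gb (in_gen_gen Wg gens gb (or_intror (or_introl eq_refl)));
            exist _ gc (in_gen_gen Wg gens gc (or_intror (or_intror (or_introl eq_refl))))]).
  intros s [<-|[<-|[<-|[]]]]; eexists; split; [left | | right; left | | right; right; left |];
    reflexivity.
Qed.

Lemma in_gen_z_pow (g : Gchain) q k :
  emb g = column q -> (exists m, (nc k * q)%Qc = zc m) -> in_gen [z] (gpow g k).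
Proof.
  intros Hg [m Hm]. apply in_gen_z_iff. exists m.
  rewrite emb_pow, Hg, column_pow, Hm. reflexivity.
Qed.

Lemma ord_dvd_chain (g : Gchain) n : 1 <= n -> Ord_is (in_gen [z]) g n -> dvd_chain n.
Proof.
  intros Hn [[_ [Hin Hmin]]|[-> _]]; [|lia].
  apply in_gen_z_iff in Hin. destruct Hin as [m Hm]. rewrite emb_pow in Hm.
  destruct (pow_column_root _ _ _ Hn Hm) as [Hg Hq].
  set (q := wh (emb g) 0%Z 0%Z) in *.
  destruct (in_gen_chain_frac _ (proj2_sig g) 0%Z 0%Z) as [t [M HM]].
  change (wh (proj1_sig g) 0%Z 0%Z) with q in HM.
  exists t. pose proof (Nat.div_mod (Qf t) n ltac:(lia)) as Hdiv.
  set (a := Qf t / n) in *. set (b := Qf t mod n) in *.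
  assert (b < n) by (apply Nat.mod_upper_bound; lia).
  destruct (Nat.eq_dec b 0) as [Hb|Hb]; [exists a; lia|].
  exfalso. apply (Hmin b); [lia | lia |]. apply (in_gen_z_pow _ q); auto.
  exists (M - Z.of_nat a * m)%Z. rewrite zc_sub, zc_mul. fold (nc a).
  rewrite <- HM, Hq, Hdiv, nc_add, nc_mul. ring.
Qed.

Lemma ord_column_inv d (Hd : 1 <= d) (HX : dvd_chain d) :
  Ord_is (in_gen [z]) (exist _ _ (column_inv_in_gen d Hd HX) : Gchain) d.
Proof.
  set (g := exist _ _ (column_inv_in_gen d Hd HX) : Gchain).
  assert (Hnd : nc d <> 0%Qc) by (apply zc_neq0; lia).
  left. split; [auto | split].
  - apply (in_gen_z_pow g (/ nc d)); [reflexivity|]. exists 1%Z. change (zc 1) with 1%Qc. field. auto.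
  - intros k Hk1 Hk2 Hin. apply in_gen_z_iff in Hin. destruct Hin as [m Hm].
    rewrite emb_pow in Hm. change (emb g) with (column (/ nc d)) in Hm.
    rewrite column_pow in Hm. apply column_inj in Hm.
    assert (Hkm : zc (Z.of_nat k) = zc (m * Z.of_nat d)).
    { rewrite zc_mul. fold (nc k) (nc d). rewrite <- Hm. field. auto. }
    apply zc_inj in Hkm. destruct (Z.le_gt_cases m 0); nia.
Qed.

Lemma ord_ga :
  Ord_is (in_gen [z]) (exist _ ga (in_gen_gen Wg gens ga (or_introl eq_refl)) : Gchain) 0.
Proof.
  right. split; auto. intros k Hk Hin. apply in_gen_z_iff in Hin. destruct Hin as [m Hm].
  rewrite emb_pow in Hm. apply (f_equal wa) in Hm. rewrite wa_pow in Hm. simpl in Hm. lia.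
Qed.

Lemma spectrum_Gchain n : spectrum (in_gen [z]) n <-> n = 0 \/ (1 <= n /\ dvd_chain n).
Proof.
  split.
  - intros [g Hg]. destruct n as [|n]; [auto|]. right. split; [lia|].
    apply (ord_dvd_chain g); auto. lia.
  - intros [->|[Hn HX]]; eexists; [apply ord_ga | apply (ord_column_inv _ Hn HX)].
Qed.

End Construction.

(** * Non-computable spectra *)

Lemma sylvester_spectrum_group (b : nat -> nat -> bool)
  (b_mono : forall k t t', b k t = true -> t <= t' -> b k t' = true) :
  exists (G : group) (h : list G), finitely_generated G /\ torsion_free G /\
    forall n, spectrum (in_gen h) n <->
              n = 0 \/ (1 <= n /\ exists t, Nat.divide n (sylvester_prod b t)).
Proof.
  exists (Gchain (sylvester_prod b)), [z (sylvester_prod b)].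
  split; [apply Gchain_finitely_generated|].
  split; [apply Gchain_torsion_free; apply sylvester_prod_pos|].
  apply spectrum_Gchain; try apply sylvester_prod_pos; apply sylvester_prod_mono; auto.
Qed.

Lemma spectrum_sylvester_iff (b : nat -> nat -> bool)
  (b_mono : forall k t t', b k t = true -> t <= t' -> b k t' = true) (A : nat -> Prop) :
  (forall n, A n <-> n = 0 \/ (1 <= n /\ exists t, Nat.divide n (sylvester_prod b t))) ->
  forall k, A (sylvester k) <-> exists t, b k t = true.
Proof.
  intros HA k. rewrite HA, <- (sylvester_dvd_prod_iff b b_mono).
  pose proof (sylvester_ge2 k). intuition lia.
Qed.

Definition diagonal_set k := forall f, code f = k -> ~ exists y, eval f [sylvester k] y.

Theorem non_ce_spectrum : exists (G : group) (h : list G),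
  finitely_generated G /\ torsion_free G /\ ~ comp_enum (spectrum (in_gen h)).
Proof.
  set (b k (t : nat) := if excluded_middle_informative (diagonal_set k) then true else false).
  assert (b_mono : forall k t t', b k t = true -> t <= t' -> b k t' = true) by auto.
  destruct (sylvester_spectrum_group b b_mono) as [G [h [Hfg [Htf Hspec]]]].
  exists G, h. split; [auto | split; [auto|]]. intros [f Hf].
  pose proof (spectrum_sylvester_iff b b_mono _ Hspec (code f)) as Hsyl.
  assert (Hb : (exists t, b (code f) t = true) <-> diagonal_set (code f)).
  { unfold b. destruct (excluded_middle_informative (diagonal_set (code f))) as [Hd|Hd].
    - split; [auto | exists 0; auto].
    - split; [intros [t Ht]; discriminate | tauto]. }
  assert (Hdiag : diagonal_set (code f) <-> ~ exists y, eval f [sylvester (code f)] y).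
  { split; [intros HB; apply HB; auto | intros Hn f' E; apply code_inj in E; subst; auto]. }
  specialize (Hf (sylvester (code f))). tauto.
Qed.

Definition halts_by k t := Nat.eqb (halted (run t (st_eval k (ncons k 0) 0))) 1.

Lemma halts_by_mono k t t' : halts_by k t = true -> t <= t' -> halts_by k t' = true.
Proof.
  unfold halts_by. intros H Hle. apply Nat.eqb_eq in H. apply Nat.eqb_eq.
  eapply halted_run_mono; eauto.
Qed.

Lemma halted_0_or_1 s : halted s = 0 \/ halted s = 1.
Proof.
  unfold halted, ifeq. destruct (_ + _); [destruct (nsnd (nsnd s))|]; simpl; auto.
Qed.

Lemma ifeq_0_1 x y : ifeq x y 0 1 = 0 <-> x = y.
Proof. unfold ifeq. destruct (x - y + (y - x)) eqn:E; simpl; split; intros; lia. Qed.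

Definition eSylvester a := ERec (enum 2) (eAdd (eMul V1 (eSub V1 (enum 1))) (enum 1)) a EZero.

Lemma den_eSylvester a v : den (eSylvester a) v = sylvester (den a v).
Proof.
  unfold eSylvester, sylvester. cbn [den nth].
  induction (den a v) as [|k IH]; cbn [nat_rect]; auto. rewrite IH. den_simpl. reflexivity.
Qed.

Definition eSylvesterProd a :=
  ERec (enum 1)
       (eMul V1 (eIfz (eHalted (eRun V2 (eStEval V0 (eCons V0 EZero) EZero)))
                      (enum 1) (eSylvester V0)))
       a a.

Lemma den_eSylvesterProd a v : den (eSylvesterProd a) v = sylvester_prod halts_by (den a v).
Proof.
  unfold eSylvesterProd, sylvester_prod, prod_upto. cbn [den nth]. set (t := den a v).
  generalize t at 3 5 as n. intros n.
  induction n as [|k IH]; [reflexivity|]. cbn [nat_rect]. rewrite IH.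
  den_simpl. rewrite den_eSylvester. cbn [den nth]. f_equal.
  unfold sylvester_factor, halts_by.
  destruct (halted_0_or_1 (run t (st_eval k (ncons k 0) 0))) as [E|E]; rewrite E; reflexivity.
Qed.

Global Opaque eSylvester eSylvesterProd.
Hint Rewrite den_eSylvester den_eSylvesterProd : den.

(** The enumerator searches for a code [w] of a pair [(t, c)] with
    [c * n = sylvester_prod halts_by t]. *)
Definition eSpectrumTest :=
  eIfz V1 EZero (eIfeq (eMul (eSnd V0) V1) (eSylvesterProd (eFst V0)) EZero (enum 1)).

Definition spectrum_enumerator := PMu (compile eSpectrumTest).

Lemma spectrum_enumerator_halts n :
  (exists y, eval spectrum_enumerator [n] y)
  <-> n = 0 \/ (1 <= n /\ exists t, Nat.divide n (sylvester_prod halts_by t)).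
Proof.
  unfold spectrum_enumerator.
  rewrite (halts_mu_iff _ (den eSpectrumTest) (eval_compile eSpectrumTest)).
  unfold eSpectrumTest. split.
  - intros [w Hw]. revert Hw. den_simpl. destruct n as [|n]; [auto|]. cbn [ifz].
    intros Hw%(proj1 (ifeq_0_1 _ _)). right. split; [lia|]. exists (nfst w), (nsnd w). auto.
  - intros [->|[Hn [t [c Hc]]]]; [exists 0; reflexivity|].
    exists (npair t c). den_simpl. rewrite nfst_npair, nsnd_npair.
    destruct n as [|n]; [lia|]. apply ifeq_0_1. auto.
Qed.

Lemma eval_comp1_inv f c v y : eval (PComp f [c]) v y -> exists y1, eval c v y1 /\ eval f [y1] y.
Proof.
  intros H. inversion H as [| | |? ? ? ys ? Hs Hf| | |]; subst.
  inversion Hs as [|? ? ? ? ? Hc Hnil]; subst. inversion Hnil; subst. eauto.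
Qed.

Definition diagonal f := PMu (PComp f [compile (eSylvester V1)]).

Lemma diagonal_halts f k :
  (exists y, eval (diagonal f) [k] y) <-> eval f [sylvester k] 0.
Proof.
  assert (Hs : forall y, eval (compile (eSylvester V1)) [y; k] (sylvester k)).
  { intros y. pose proof (eval_compile (eSylvester V1) [y; k]) as H.
    rewrite den_eSylvester in H. exact H. }
  split.
  - intros [y Hy]. inversion Hy as [| | | | | |? ? ? H0 _]; subst.
    destruct (eval_comp1_inv _ _ _ _ H0) as [y1 [Hy1 Hf]].
    rewrite (eval_det _ _ _ Hy1 _ (Hs y)) in Hf. exact Hf.
  - intros Hf. exists 0. constructor; [|intros; lia].
    econstructor; [apply evals1, Hs | exact Hf].
Qed.

Theorem ce_noncomputable_spectrum : exists (G : group) (h : list G),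
  finitely_generated G /\ torsion_free G /\
  comp_enum (spectrum (in_gen h)) /\ ~ computable (spectrum (in_gen h)).
Proof.
  destruct (sylvester_spectrum_group halts_by halts_by_mono) as [G [h [Hfg [Htf Hspec]]]].
  exists G, h. split; [auto | split; [auto | split]].
  - exists spectrum_enumerator. intros n. rewrite Hspec, spectrum_enumerator_halts. tauto.
  - intros [f Hf]. set (K := code (diagonal f)).
    pose proof (spectrum_sylvester_iff _ halts_by_mono _ Hspec K) as Hsyl.
    assert (HK : (exists t, halts_by K t = true) <-> exists y, eval (diagonal f) [K] y).
    { rewrite halts_iff_machine_halts. unfold halts_by. simpl code_list. fold K.
      split; intros [t Ht]; exists t; apply Nat.eqb_eq; auto. }
    rewrite diagonal_halts in HK.
    destruct (Hf (sylvester K)) as [Hin Hout].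
    destruct (classic (spectrum (in_gen h) (sylvester K))) as [HS|HS].
    + pose proof (eval_det _ _ _ (Hin HS) _ (proj1 HK (proj1 Hsyl HS))). discriminate.
    + apply HS, Hsyl, HK, Hout, HS.
Qed.

Theorem corollary4p4 :
  (exists (G : group) (h : list G),
      finitely_generated G /\ torsion_free G /\
      ~ comp_enum (spectrum (in_gen h)))
  /\
  (exists (G : group) (h : list G),
      finitely_generated G /\ torsion_free G /\
      comp_enum (spectrum (in_gen h)) /\ ~ computable (spectrum (in_gen h))).
Proof. split; [apply non_ce_spectrum | apply ce_noncomputable_spectrum]. Qed.
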